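(* Let $n\ge1$ and let $\mathcal{P}$ be a finite index set of pairs $(i,j)$. For each $(i,j)\in\mathcal{P}$ let $H^{[ij]}\in\mathbb{R}^{n\times n}$ be symmetric positive semidefinite, let $c^{[ij]}\in\mathbb{R}^n$ lie in the column space of $H^{[ij]}$, let $h^{[ij]}\in\mathbb{R}$, and let $w_{ij}\ge 0$. Define $$\mathfrak{B}^{[ij]}(\mathbf{u})=\exp\!\big(-\mathbf{u}^\top H^{[ij]}\mathbf{u}-(c^{[ij]})^\top\mathbf{u}-h^{[ij]}\big),\qquad F(\mathbf{u})=\sum_{(i,j)\in\mathcal{P}} w_{ij}\,\mathfrak{B}^{[ij]}(\mathbf{u}),$$ and $$D_{ij}=\left\{\mathbf{u}:\ \mathbf{u}^\top H^{[ij]}\mathbf{u}+(c^{[ij]})^\top\mathbf{u}+\tfrac14 (c^{[ij]})^\top (H^{[ij]})^{+}c^{[ij]}\le\tfrac12\right\},$$ where $(H^{[ij]})^{+}$ is the Moore–Penrose pseudoinverse. Let $\mathcal{U}\subset\mathbb{R}^n$ be a bounded polytope (the convex hull of finitely many vertices). If every vertex of $\mathcal{U}$ belongs to $D_{ij}$ for every $(i,j)\in\mathcal{P}$, then $F$ is concave on $\mathcal{U}$.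
   Context: In the application, the weights are $w_{ij}=\sqrt{P_k(M^{[i]})P_k(M^{[j]})}$ (products of current model probabilities), $F$ is the upper bound on the predicted misdiagnosis probability as a function of the stacked future input $\mathbf{u}$, and $\mathcal{U}$ is a polytopic input constraint set. *)

From HB Require Import structures.
From mathcomp Require Import all_boot all_order all_algebra.
From mathcomp Require Import reals sequences exp.
Set Implicit Arguments. Unset Strict Implicit. Unset Printing Implicit Defensive.
Import Order.TTheory GRing.Theory Num.Theory.
Local Open Scope ring_scope.

Definition qform (R : realType) (n : nat) (x : 'cV[R]_n) (A : 'M[R]_n) (y : 'cV[R]_n) : R :=
  (x^T *m A *m y) 0 0.

Definition lform (R : realType) (n : nat) (c u : 'cV[R]_n) : R := (c^T *m u) 0 0.

Definition symmetric_mx (R : realType) (n : nat) (H : 'M[R]_n) : Prop := H^T = H.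

Definition psd_mx (R : realType) (n : nat) (H : 'M[R]_n) : Prop :=
  symmetric_mx H /\ forall x : 'cV[R]_n, 0 <= qform x H x.

Definition in_colspace (R : realType) (n : nat) (H : 'M[R]_n) (c : 'cV[R]_n) : Prop :=
  exists y : 'cV[R]_n, c = H *m y.

(* X is the Moore-Penrose pseudoinverse of H (the four Penrose conditions;
   such X exists and is unique) *)
Definition is_pinv (R : realType) (n : nat) (H X : 'M[R]_n) : Prop :=
  [/\ H *m X *m H = H, X *m H *m X = X, (H *m X)^T = H *m X & (X *m H)^T = X *m H].

Definition Bfun (R : realType) (n : nat) (H : 'M[R]_n) (c : 'cV[R]_n) (h : R)
  (u : 'cV[R]_n) : R := expR (- qform u H u - lform c u - h).

Definition Ffun (R : realType) (n : nat) (I : finType) (w : I -> R)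
  (H : I -> 'M[R]_n) (c : I -> 'cV[R]_n) (h : I -> R) (u : 'cV[R]_n) : R :=
  \sum_(p : I) w p * Bfun (H p) (c p) (h p) u.

Definition in_D (R : realType) (n : nat) (H Hp : 'M[R]_n) (c : 'cV[R]_n) (u : 'cV[R]_n) : Prop :=
  qform u H u + lform c u + 4^-1 * qform c Hp c <= 2^-1.

Definition in_hull (R : realType) (n m : nat) (V : 'I_m -> 'cV[R]_n) (u : 'cV[R]_n) : Prop :=
  exists lam : 'I_m -> R, [/\ forall k, 0 <= lam k, \sum_k lam k = 1 &
                              u = \sum_k lam k *: V k].

Definition concave_on (R : realType) (n : nat) (S : 'cV[R]_n -> Prop) (f : 'cV[R]_n -> R) : Prop :=
  forall x y : 'cV[R]_n, forall t : R, S x -> S y -> 0 <= t -> t <= 1 ->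
    t * f x + (1 - t) * f y <= f (t *: x + (1 - t) *: y).

(* With c = H y0 (c is in the column space of H), completing the square turns the
   region D into the ellipsoid |2u + y0|_H^2 <= 2, which is convex and hence contains
   the polytope.  Along a segment u = y + s d the exponent of B is a quadratic q(s)
   and (-B)'' = (q'' - q'^2) B; here q'' = 2 |d|_H^2 and q'(s) = <2u + y0, d>_H, so the
   Cauchy-Schwarz inequality for the semi-inner product of H bounds q'^2 by
   |2u + y0|_H^2 |d|_H^2 <= q'' inside the ellipsoid.  Each B is thus concave on the
   ellipsoid, and F is a nonnegative combination of them. *)
From HB Require Import structures.
From mathcomp Require Import all_boot all_order all_algebra.
From mathcomp Require Import reals sequences exp.
From mathcomp Require Import boolp topology normedtype derive realfun convex.
From mathcomp Require Import interval_inference.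
From mathcomp Require Import ring lra.
Set Implicit Arguments. Unset Strict Implicit.
Import Order.TTheory GRing.Theory Num.Theory numFieldNormedType.Exports.
Local Open Scope ring_scope.

Section QuadraticForms.
Context {R : realType} {n : nat}.
Implicit Types (a b u v : 'cV[R]_n) (A X : 'M[R]_n).

Lemma qformDl a b A v : qform (a + b) A v = qform a A v + qform b A v.
Proof. by rewrite /qform linearD /= !mulmxDl mxE. Qed.

Lemma qformDr a b A v : qform v A (a + b) = qform v A a + qform v A b.
Proof. by rewrite /qform !mulmxDr mxE. Qed.

Lemma qformZl k a A v : qform (k *: a) A v = k * qform a A v.
Proof. by rewrite /qform linearZ /= -!scalemxAl mxE. Qed.

Lemma qformZr k a A v : qform v A (k *: a) = k * qform v A a.
Proof. by rewrite /qform -!scalemxAr mxE. Qed.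

Lemma qformBl a b A v : qform (a - b) A v = qform a A v - qform b A v.
Proof. by rewrite qformDl -scaleN1r qformZl mulN1r. Qed.

Lemma qformBr a b A v : qform v A (a - b) = qform v A a - qform v A b.
Proof. by rewrite qformDr -scaleN1r qformZr mulN1r. Qed.

Lemma qform_suml I (r : seq I) (P : pred I) (f : I -> 'cV[R]_n) A v :
  qform (\sum_(i <- r | P i) f i) A v = \sum_(i <- r | P i) qform (f i) A v.
Proof.
apply: (big_morph _ (fun a b => qformDl a b A v)).
by rewrite /qform linear0 !mul0mx mxE.
Qed.

Lemma qform_sumr I (r : seq I) (P : pred I) (f : I -> 'cV[R]_n) A v :
  qform v A (\sum_(i <- r | P i) f i) = \sum_(i <- r | P i) qform v A (f i).
Proof.
apply: (big_morph _ (fun a b => qformDr a b A v)).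
by rewrite /qform !mulmx0 mxE.
Qed.

Lemma qformC A u v : symmetric_mx A -> qform u A v = qform v A u.
Proof.
move=> sA; rewrite /qform.
transitivity ((u^T *m A *m v)^T 0 0); first by rewrite [RHS]mxE.
by rewrite !trmx_mul trmxK sA mulmxA.
Qed.

Lemma lform_mulmx A y0 u : symmetric_mx A -> lform (A *m y0) u = qform y0 A u.
Proof. by move=> sA; rewrite /lform /qform trmx_mul sA. Qed.

Lemma qform_pinv_mulmx A X y0 : symmetric_mx A -> is_pinv A X ->
  qform (A *m y0) X (A *m y0) = qform y0 A y0.
Proof. by move=> sA [AXA _ _ _]; rewrite /qform trmx_mul sA -{3}AXA !mulmxA. Qed.

Lemma quadratic_ge0_discr (a b q : R) : 0 <= q ->
  (forall l, 0 <= a + 2 * l * b + l ^+ 2 * q) -> b ^+ 2 <= a * q.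
Proof.
move=> q_ge0 ge0.
have [q0|q_neq0] := eqVneq q 0.
  have [->|b_neq0] := eqVneq b 0; first by rewrite q0 expr0n mulr0.
  have := ge0 (- (a + 1) / (2 * b)).
  have -> : 2 * (- (a + 1) / (2 * b)) * b = - (a + 1) by field; rewrite b_neq0.
  rewrite q0; lra.
have q_gt0 : 0 < q by rewrite lt_neqAle eq_sym q_neq0.
have hl := ge0 (- b / q); have e : - b / q * q = - b by field.
have := mulr_ge0 (ltW q_gt0) hl.
have -> : q * (a + 2 * (- b / q) * b + (- b / q) ^+ 2 * q)
  = q * a + 2 * b * (- b / q * q) + (- b / q * q) ^+ 2 by ring.
rewrite e; lra.
Qed.

Lemma qform_CauchySchwarz A a b : psd_mx A ->
  qform a A b ^+ 2 <= qform a A a * qform b A b.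
Proof.
move=> [sA psdA]; apply: quadratic_ge0_discr => // l.
have := psdA (a + l *: b).
rewrite !(qformDl, qformDr, qformZl, qformZr) (qformC b a sA).
by congr (_ <= _); ring.
Qed.

Lemma qform_cross_le A a b r : psd_mx A ->
  qform a A a <= r -> qform b A b <= r -> qform a A b <= r.
Proof.
move=> [sA psdA] ha hb; have := psdA (a - b).
by rewrite !(qformBl, qformBr) (qformC b a sA); lra.
Qed.

Lemma qform_convex_sum_le (I : finType) A (lam : I -> R) (z : I -> 'cV[R]_n) r :
  psd_mx A -> (forall i, 0 <= lam i) -> \sum_i lam i = 1 ->
  (forall i, qform (z i) A (z i) <= r) ->
  qform (\sum_i lam i *: z i) A (\sum_i lam i *: z i) <= r.
Proof.
move=> psdA lam_ge0 lam1 hz.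
have sum_le (f : I -> R) : (forall i, f i <= r) -> \sum_i lam i * f i <= r.
  move=> hf; apply: (@le_trans _ _ (\sum_i lam i * r)).
    by apply: ler_sum => i _; exact: ler_wpM2l.
  by rewrite -big_distrl /= lam1 mul1r.
rewrite qform_suml; under eq_bigr do rewrite qformZl.
apply: (sum_le) => i.
rewrite qform_sumr; under eq_bigr do rewrite qformZr.
apply: (sum_le) => j.
exact: qform_cross_le.
Qed.

End QuadraticForms.

Section Ellipsoid.
Context {R : realType} {n : nat}.
Implicit Types (u x y : 'cV[R]_n) (A X : 'M[R]_n).

Definition in_ellipsoid A (y0 : 'cV[R]_n) u : Prop :=
  qform (2 *: u + y0) A (2 *: u + y0) <= 2.

(* Completing the square: 4 (u^T A u + y0^T A u) + y0^T A y0 = |2u + y0|_A^2. *)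
Lemma in_D_ellipsoid A X (y0 : 'cV[R]_n) u : symmetric_mx A -> is_pinv A X ->
  in_D A X (A *m y0) u -> in_ellipsoid A y0 u.
Proof.
move=> sA pinvA; rewrite /in_D /in_ellipsoid lform_mulmx // qform_pinv_mulmx //.
by rewrite !(qformDl, qformDr, qformZl, qformZr) (qformC y0 u sA); lra.
Qed.

Lemma in_ellipsoid_convex_sum (I : finType) A (y0 : 'cV[R]_n)
    (lam : I -> R) (v : I -> 'cV[R]_n) :
  psd_mx A -> (forall i, 0 <= lam i) -> \sum_i lam i = 1 ->
  (forall i, in_ellipsoid A y0 (v i)) -> in_ellipsoid A y0 (\sum_i lam i *: v i).
Proof.
move=> psdA lam_ge0 lam1 hv; rewrite /in_ellipsoid.
have -> : 2 *: (\sum_i lam i *: v i) + y0 = \sum_i lam i *: (2 *: v i + y0).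
  rewrite scaler_sumr -[y0 in LHS]scale1r -lam1 scaler_suml -big_split /=.
  by apply: eq_bigr => i _; rewrite scalerDr !scalerA mulrC.
exact: qform_convex_sum_le.
Qed.

Lemma in_ellipsoid_conv A (y0 : 'cV[R]_n) x y t : psd_mx A -> 0 <= t -> t <= 1 ->
  in_ellipsoid A y0 x -> in_ellipsoid A y0 y -> in_ellipsoid A y0 (t *: x + (1 - t) *: y).
Proof.
move=> psdA t0 t1 hx hy.
pose lam (i : bool) := if i then t else 1 - t.
pose v (i : bool) := if i then x else y.
have := @in_ellipsoid_convex_sum _ A y0 lam v psdA.
rewrite !big_bool /=; apply; first by case=> /=; lra.
- by rewrite addrC subrK.
- by case.
Qed.

End Ellipsoid.

Section ExpQuadratic.
Context {R : realType}.

Lemma is_derive_expR_comp (f : R -> R) (x df : R) : is_derive x 1 f df ->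
  is_derive x 1 (fun y => expR (f y)) (expR (f x) * df).
Proof.
move=> [fx1 <-].
have dc : derivable (expR \o f) x 1.
  apply/derivable1_diffP; apply: differentiable_comp; first exact/derivable1_diffP.
  exact/derivable1_diffP/derivable_expR.
apply: DeriveDef; first exact: dc.
rewrite -derive1E (derive1_comp fx1); last exact: derivable_expR.
rewrite !derive1E.
by case: (is_derive_expR (f x)) => _ ->.
Qed.

Lemma is_derive_quadratic (a0 a1 a2 s : R) :
  is_derive s 1 (fun s => a0 + a1 * s + a2 * s ^+ 2) (a1 + 2 * a2 * s).
Proof.
by apply: is_derive_eq; rewrite /GRing.scale /= !mulr1 add0r mul1r; ring.
Qed.

(* -exp(-q) is convex when q'^2 <= q'', because (-exp(-q))'' = (q'' - q'^2) exp(-q). *)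
Lemma expR_Nquadratic_concave (a0 a1 a2 t : R) :
  (forall s, 0 <= s <= 1 -> (a1 + 2 * a2 * s) ^+ 2 <= 2 * a2) -> 0 <= t -> t <= 1 ->
  t * expR (- (a0 + a1 * 1 + a2 * 1 ^+ 2))
    + (1 - t) * expR (- (a0 + a1 * 0 + a2 * 0 ^+ 2))
  <= expR (- (a0 + a1 * t + a2 * t ^+ 2)).
Proof.
move=> slope_le t0 t1.
pose q s := a0 + a1 * s + a2 * s ^+ 2.
pose f s := - expR (- q s).
pose Df s := (a1 + 2 * a2 * s) * expR (- q s).
have f_der (s : R) : is_derive s 1 f (Df s).
  have -> : Df s = - (expR (- q s) * - (a1 + 2 * a2 * s)).
    by rewrite /Df mulrN opprK mulrC.
  exact/is_deriveN/is_derive_expR_comp/is_deriveN/is_derive_quadratic.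
have Df_der (s : R) : is_derive s 1 Df ((2 * a2 - (a1 + 2 * a2 * s) ^+ 2) * expR (- q s)).
  have slope_der : is_derive s 1 (fun s => a1 + 2 * a2 * s) (2 * a2).
    by apply: is_derive_eq; rewrite /GRing.scale /= add0r mul1r mulr1.
  have := is_deriveM slope_der
    (is_derive_expR_comp (is_deriveN (is_derive_quadratic a0 a1 a2 s))).
  by congr is_derive; rewrite /GRing.scale /=; ring.
have Df_eq : 'D_1 f = Df by apply/funext => s; case: (f_der s).
have f_cont (s : R) : {for s, continuous f}.
  by apply/differentiable_continuous/derivable1_diffP; case: (f_der s).
have u0 : 0 <= 1 - t by lra.
have u1 : 1 - t <= 1 by lra.
have := @second_derivative_convex R f 0 1 _ _ _ _ _ (Itv01 u0 u1) ler01.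
rewrite !convRE /= /unstable.onem.
have -> : (1 - t) * 0 + (1 - (1 - t)) * 1 = t by ring.
rewrite (_ : 1 - (1 - t) = t); last by ring.
move=> f_convex; suff : f t <= (1 - t) * f 0 + t * f 1.
  by rewrite /f /q !mulrN -opprD lerN2 addrC.
apply: f_convex.
- move=> s /andP[s0 s1]; rewrite Df_eq; case: (Df_der s) => _ ->.
  by rewrite mulr_ge0 ?expR_ge0 // subr_ge0 slope_le // !ltW.
- exact/cvg_at_left_filter/f_cont.
- exact/cvg_at_right_filter/f_cont.
- by move=> s _; case: (f_der s).
- by move=> s _; rewrite Df_eq; case: (Df_der s).
Qed.

End ExpQuadratic.

Section Concavity.
Context {R : realType} {n : nat}.
Implicit Types (S T : 'cV[R]_n -> Prop) (A : 'M[R]_n).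

Lemma concave_on_sub S T f : (forall u, S u -> T u) -> concave_on T f -> concave_on S f.
Proof. by move=> ST fT x y t Sx Sy; apply: fT; apply: ST. Qed.

Lemma concave_on_sum (I : finType) S (w : I -> R) (f : I -> 'cV[R]_n -> R) :
  (forall i, 0 <= w i) -> (forall i, concave_on S (f i)) ->
  concave_on S (fun u => \sum_i w i * f i u).
Proof.
move=> w_ge0 f_conc x y t Sx Sy t0 t1.
rewrite !big_distrr -big_split /=; apply: ler_sum => i _.
rewrite mulrCA [(1 - t) * _]mulrCA -mulrDr; apply: ler_wpM2l => //.
exact: f_conc.
Qed.

Lemma Bfun_concave_on_ellipsoid A (y0 : 'cV[R]_n) h : psd_mx A ->
  concave_on (in_ellipsoid A y0) (Bfun A (A *m y0) h).
Proof.
move=> psdA x y t Ex Ey t0 t1; have [sA _] := psdA.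
pose d := x - y.
have seg s : y + s *: d = s *: x + (1 - s) *: y.
  by rewrite /d scalerBr scalerBl scale1r addrCA.
have seg_x : x = y + 1 *: d by rewrite scale1r /d addrC subrK.
have seg_y : y = y + 0 *: d by rewrite scale0r addr0.
clearbody d.
pose a1 := 2 * qform y A d + qform y0 A d.
pose a2 := qform d A d.
have B_seg s : Bfun A (A *m y0) h (y + s *: d)
    = expR (- (qform y A y + qform y0 A y + h + a1 * s + a2 * s ^+ 2)).
  rewrite /Bfun lform_mulmx // !(qformDl, qformDr, qformZl, qformZr) (qformC d y sA).
  by congr expR; rewrite /a1 /a2; ring.
rewrite -seg {1}seg_x {2}seg_y !B_seg.
apply: expR_Nquadratic_concave => // s /andP[s0 s1].
have slope : a1 + 2 * a2 * s = qform (2 *: (y + s *: d) + y0) A d.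
  by rewrite /a1 /a2 !(qformDl, qformZl); ring.
have E_seg : in_ellipsoid A y0 (y + s *: d) by rewrite seg; exact: in_ellipsoid_conv.
rewrite slope; apply: le_trans (qform_CauchySchwarz _ _ psdA) _.
by apply: ler_wpM2r; [exact: psdA.2 | exact: E_seg].
Qed.

End Concavity.

Theorem mainTheorem2 (R : realType) (n : nat) (I : finType)
  (H Hp : I -> 'M[R]_n) (c : I -> 'cV[R]_n) (h w : I -> R)
  (m : nat) (V : 'I_m -> 'cV[R]_n) :
  (0 < n)%N ->
  (forall p, psd_mx (H p)) ->
  (forall p, is_pinv (H p) (Hp p)) ->
  (forall p, in_colspace (H p) (c p)) ->
  (forall p, 0 <= w p) ->
  (forall p k, in_D (H p) (Hp p) (c p) (V k)) ->
  concave_on (in_hull V) (Ffun w H c h).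
Proof.
move=> _ psdH pinvH colH w_ge0 VD.
apply: concave_on_sum => // p.
have [y0 c_eq] := colH p; rewrite c_eq.
apply: (concave_on_sub _ (Bfun_concave_on_ellipsoid (h p) (psdH p))).
move=> _ [lam [lam_ge0 lam1 ->]].
apply: (in_ellipsoid_convex_sum (psdH p) lam_ge0 lam1) => k.
apply: (in_D_ellipsoid (psdH p).1 (pinvH p)).
by rewrite -c_eq.
Qed.
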